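(* Let $n(k_1,k_2,k_3)=(e^{ik_1}-1)(e^{ik_2}-1)(e^{ik_3}-1)+\overline{(e^{ik_1}-1)(e^{ik_2}-1)(e^{ik_3}-1)}$. There exists $C>0$ such that for all $k_1,k_2,k_3\in(-\pi,\pi]$, with $k=k_1+k_2+k_3$, we have $|n(k_1,k_2,k_3)|\le C|k|$. *)

From Stdlib Require Import Reals.
From Coquelicot Require Import Coquelicot.
Open Scope R_scope.

Definition expi (k : R) : C := (cos k, sin k).

Definition nfun (k1 k2 k3 : R) : C :=
  let w := Cmult (Cmult (Cminus (expi k1) (RtoC 1)) (Cminus (expi k2) (RtoC 1)))
                 (Cminus (expi k3) (RtoC 1)) in
  Cplus w (Cconj w).

From Stdlib Require Import Reals.
From Coquelicot Require Import Coquelicot.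
From Stdlib Require Import Ratan Lra.
Open Scope R_scope.

(* Since e^{ik} - 1 = 2i sin(k/2) e^{ik/2}, the product w equals
   -8i sin(k1/2) sin(k2/2) sin(k3/2) e^{ik/2}, so n = w + conj w is the real
   number 16 sin(k1/2) sin(k2/2) sin(k3/2) sin(k/2). *)

Lemma Rabs_sin_le_pos x : 0 < x -> Rabs (sin x) <= x.
Proof.
  intro x_pos.
  pose proof (sin_lt_x x x_pos); pose proof (SIN_bound x).
  apply Rabs_le; split; [|lra].
  destruct (Rle_dec 1 x); [lra|].
  assert (0 <= sin x) by (apply sin_ge_0; pose proof PI2_3_2; lra).
  lra.
Qed.

Lemma Rabs_sin_le x : Rabs (sin x) <= Rabs x.
Proof.
  destruct (Rtotal_order x 0) as [x_neg | [-> | x_pos]].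
  - rewrite <- (Ropp_involutive x), sin_neg, Rabs_Ropp, Rabs_Ropp, (Rabs_right (- x)) by lra.
    apply Rabs_sin_le_pos; lra.
  - rewrite sin_0; lra.
  - rewrite (Rabs_right x) by lra; apply Rabs_sin_le_pos; lra.
Qed.

Lemma Rabs_sin_le_1 x : Rabs (sin x) <= 1.
Proof. apply Rabs_le, SIN_bound. Qed.

Lemma Rabs_sin3_le_1 a b c : Rabs (sin a * sin b * sin c) <= 1.
Proof.
  rewrite !Rabs_mult.
  pose proof (Rabs_sin_le_1 a); pose proof (Rabs_sin_le_1 b); pose proof (Rabs_sin_le_1 c).
  pose proof (Rabs_pos (sin a)); pose proof (Rabs_pos (sin b)); pose proof (Rabs_pos (sin c)).
  assert (Rabs (sin a) * Rabs (sin b) <= 1) by nra.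
  nra.
Qed.

Lemma cos_sin_half k :
  cos k = 1 - 2 * sin (k / 2) * sin (k / 2) /\ sin k = 2 * sin (k / 2) * cos (k / 2).
Proof.
  rewrite <- sin_2a, <- cos_2a_sin.
  replace (2 * (k / 2)) with k by field.
  split; reflexivity.
Qed.

Lemma nfun_sin_half k1 k2 k3 :
  nfun k1 k2 k3 =
  RtoC (16 * (sin (k1 / 2) * sin (k2 / 2) * sin (k3 / 2)) * sin ((k1 + k2 + k3) / 2)).
Proof.
  unfold nfun, expi, Cplus, Cmult, Cminus, Copp, Cconj, RtoC; simpl.
  destruct (cos_sin_half k1) as [-> ->], (cos_sin_half k2) as [-> ->],
    (cos_sin_half k3) as [-> ->].
  replace ((k1 + k2 + k3) / 2) with (k1 / 2 + k2 / 2 + k3 / 2) by field.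
  rewrite !sin_plus, !cos_plus.
  apply injective_projections; simpl; ring.
Qed.

Lemma Cmod_nfun_le k1 k2 k3 : Cmod (nfun k1 k2 k3) <= 8 * Rabs (k1 + k2 + k3).
Proof.
  rewrite nfun_sin_half, Cmod_R, Rabs_mult, (Rabs_mult 16), (Rabs_right 16) by lra.
  pose proof (Rabs_sin3_le_1 (k1 / 2) (k2 / 2) (k3 / 2)) as sin3_le_1.
  pose proof (Rabs_pos (sin (k1 / 2) * sin (k2 / 2) * sin (k3 / 2))).
  pose proof (Rabs_sin_le ((k1 + k2 + k3) / 2)) as sin_half_le.
  pose proof (Rabs_pos (sin ((k1 + k2 + k3) / 2))).
  unfold Rdiv in sin_half_le; rewrite Rabs_mult, (Rabs_right (/ 2)) in sin_half_le by lra.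
  nra.
Qed.

Theorem mainTheorem3 :
  exists C0 : R, 0 < C0 /\
    forall k1 k2 k3 : R,
      -PI < k1 <= PI -> -PI < k2 <= PI -> -PI < k3 <= PI ->
      Cmod (nfun k1 k2 k3) <= C0 * Rabs (k1 + k2 + k3).
Proof.
  exists 8; split; [lra|].
  intros k1 k2 k3 _ _ _.
  apply Cmod_nfun_le.
Qed.
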